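(* Let $G$ be a finite group. Then $G$ is nested if and only if $K_\infty=G$.
   Context: All groups are finite. For $\chi\in\mathrm{Irr}(G)$, the center of $\chi$ is $Z(\chi)=\{g\in G : |\chi(g)|=\chi(1)\}$; equivalently $Z(\chi)/\ker(\chi)=Z(G/\ker(\chi))$. A group $G$ is nested if for all $\chi,\psi\in\mathrm{Irr}(G)$ either $Z(\chi)\le Z(\psi)$ or $Z(\psi)\le Z(\chi)$. For a nonabelian group $H$, let $\mathcal{X}_H=\{\chi\in\mathrm{Irr}(H) : Z(\chi)>Z(H)\}$ (strict containment) and define $K(H)=\bigcap_{\chi\in\mathcal{X}_H}\ker(\chi)$; if $H$ is abelian, set $K(H)=H$. Define normal subgroups $K_i$ of $G$ by $K_0=1$ and $K_{i+1}/K_{i}=K(G/K_{i})$ for $i\ge 0$. This ascending chain stabilizes; $K_\infty$ denotes its terminal term. *)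

From mathcomp Require Import all_boot all_order all_algebra all_fingroup all_solvable all_field all_character.
Set Implicit Arguments. Unset Strict Implicit. Unset Printing Implicit Defensive.
Local Open Scope ring_scope.

(* A finite group G is nested if the centers of its irreducible characters are
   totally ordered by inclusion. 'Z(chi)%CF is MathComp's cfcenter, which for a
   character chi is [set g in G | `|chi g| == chi 1]. *)
Definition nested (gT : finGroupType) (G : {group gT}) : bool :=
  [forall i : Iirr G, forall j : Iirr G,
     ('Z('chi_i)%CF \subset 'Z('chi_j)%CF) || ('Z('chi_j)%CF \subset 'Z('chi_i)%CF)].

(* K(H): H if H is abelian; otherwise the intersection of the kernels of the
   irreducible characters chi with Z(chi) > Z(H) (intersected with H, which is
   harmless since kernels lie in H, and gives H for an empty family). *)
Definition Kfun (gT : finGroupType) (H : {group gT}) : {set gT} :=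
  if abelian H then (H : {set gT})
  else (H :&: \bigcap_(i : Iirr H | 'Z(H)%g \proper 'Z('chi_i)%CF) cfker 'chi_i)%g.

(* K_0 = 1, K_{i+1}/K_i = K(G/K_i), i.e. K_{i+1} = preimage of K(G/K_i)
   under the canonical projection G -> G/K_i. *)
Fixpoint Kseq (gT : finGroupType) (G : {group gT}) (n : nat) : {set gT} :=
  match n with
  | 0 => 1%g
  | n'.+1 => (coset (Kseq G n') @*^-1 (Kfun ((G / Kseq G n')%G)))%g
  end.

(* Terminal term of the (ascending, eventually stationary) chain: the chain
   is stationary from index #|G| on. *)
Definition Kinf (gT : finGroupType) (G : {group gT}) : {set gT} :=
  Kseq G #|G|.

From mathcomp Require Import all_boot all_order all_algebra all_fingroup all_solvable all_field all_character.
Set Implicit Arguments. Unset Strict Implicit. Unset Printing Implicit Defensive.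
Local Open Scope ring_scope.
Local Open Scope group_scope.

(* A character chi of H outside X_H has the least possible center Z(H), and a
   character in X_H contains K(H) in its kernel, i.e. is a character of H/K(H).
   Hence H is nested as soon as H/K(H) is.  Conversely, if H is nested and
   nonabelian, let chi be a character in X_H with the smallest center, and pick
   x in Z(chi) outside Z(H) and y in H not commuting with x.  Then x is central
   modulo the kernel of every character in X_H, so [x, y] is a nontrivial
   element of K(H).  Applied to the quotients G/K_i (characters of G/N are the
   characters of G with N in their kernel, with the same centers modulo N), the
   first fact propagates nestedness from G/K_(i+1) down to G/K_i, so K_oo = G
   implies that G is nested; the second shows that for nested G the chain K_i
   increases strictly until it reaches G, which it must do within |G| steps. *)

Definition nested_mod (gT : finGroupType) (G : {group gT}) (N : {set gT}) :=
  forall i j : Iirr G, N \subset cfker 'chi_i -> N \subset cfker 'chi_j ->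
    ('Z('chi_i)%CF \subset 'Z('chi_j)%CF) || ('Z('chi_j)%CF \subset 'Z('chi_i)%CF).

Section Modulo.
Variables (gT : finGroupType) (G K : {group gT}).
Hypothesis nsKG : K <| G.

Lemma cfker_modE (psi : 'CF(G / K)) : cfker (psi %% K)%CF = coset K @*^-1 cfker psi.
Proof.
rewrite cfker_morph ?normal_norm //; apply/setIidPr.
by rewrite sub_cosetpre_quo // cfker_sub.
Qed.

Lemma cfcenter_modE (psi : 'CF(G / K)) : 'Z(psi %% K)%CF = coset K @*^-1 'Z(psi)%CF.
Proof.
rewrite /cfcenter cfMod_charE //; case: ifP => _; last exact: cfker_modE.
apply/setP=> x; apply/setIdP/morphpreP=> [[Gx] | [Nx /setIdP[GKx]]].
  by rewrite cfModE // cfMod1 (subsetP (normal_norm nsKG)) // inE mem_quotient.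
have Gx : x \in G by rewrite -(quotientGK nsKG) mem_morphpre.
by rewrite cfModE // cfMod1.
Qed.

Lemma nested_mod_quotient (A : {group coset_of K}) :
  nested_mod G (coset K @*^-1 A) <-> nested_mod (G / K) A.
Proof.
split=> [nestedG i j | nestedGK i j kerAi kerAj].
  rewrite -!(@cosetpreSK _ K) -!cfker_modE -!cfcenter_modE -!mod_IirrE //.
  exact: nestedG.
have sKA := sub_cosetpre A.
have kerKi := subset_trans sKA kerAi; have kerKj := subset_trans sKA kerAj.
move: kerAi kerAj; rewrite -(quo_IirrK nsKG kerKi) -(quo_IirrK nsKG kerKj).
rewrite !mod_IirrE // !cfker_modE !cfcenter_modE !cosetpreSK.
exact: nestedGK.
Qed.

End Modulo.

Section NestedMod.
Variables (gT : finGroupType) (G : {group gT}).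

Lemma nested_modS (N M : {set gT}) : N \subset M -> nested_mod G N -> nested_mod G M.
Proof.
by move=> sNM nestedN i j kerMi kerMj; apply: nestedN; apply: subset_trans sNM _.
Qed.

Lemma nested_mod1 : nested G <-> nested_mod G 1.
Proof.
split=> [/forallP nestedG i j _ _ | nestedG]; first exact: forallP (nestedG i) j.
by apply/forallP=> i; apply/forallP=> j; apply: nestedG; apply: sub1G.
Qed.

Lemma nested_modG : nested_mod G G.
Proof.
have cfcenterG i : G \subset cfker 'chi[G]_i -> 'Z('chi_i)%CF = G.
  move=> kerGi; apply/eqP; rewrite eqEsubset cfcenter_sub.
  exact: subset_trans kerGi (normal_sub (cfker_center_normal _)).
by move=> i j /cfcenterG-> /cfcenterG->; rewrite subxx.
Qed.

Lemma center_sub_cfcenter_irr (i : Iirr G) : 'Z(G) \subset 'Z('chi_i)%CF.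
Proof. by rewrite -cap_cfcenter_irr (bigcap_inf i). Qed.

Lemma cfcenter_commg_cfker (phi : 'CF(G)) x y :
  x \in 'Z(phi)%CF -> y \in G -> [~ x, y] \in cfker phi.
Proof.
move=> Zx Gy; have Gx := subsetP (cfcenter_sub phi) x Zx.
have nKG : G \subset 'N(cfker phi) by apply: normal_norm (cfker_normal phi).
have /setIP[_ /centP cx] : coset (cfker phi) x \in 'Z(G / cfker phi).
  exact: subsetP (cfcenter_subset_center phi) _ (mem_quotient _ Zx).
apply: coset_idr; first by rewrite groupR ?(subsetP nKG).
by rewrite morphR ?(subsetP nKG) //; apply/eqP/commgP/cx/mem_quotient.
Qed.

End NestedMod.

Section Kfun.
Variables (gT : finGroupType) (H : {group gT}).

Lemma Kfun_group_set : group_set (Kfun H).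
Proof. by rewrite /Kfun; case: ifP => _; apply: groupP. Qed.

Canonical Kfun_group := Group Kfun_group_set.

Lemma Kfun_normal : Kfun H <| H.
Proof.
rewrite /Kfun; case: ifP => _; first exact: normal_refl.
rewrite /normal subsetIl normsI ?normG // norms_bigcap //.
by apply/bigcapsP=> i _; apply: normal_norm (cfker_normal _).
Qed.

Lemma nested_mod_Kfun : nested_mod H (Kfun H) -> nested_mod H 1.
Proof.
rewrite /Kfun; case: ifP => [/center_idP cHH _ | _ nestedK] i j _ _.
  have cfcenterH k : 'Z('chi[H]_k)%CF = H.
    by apply/eqP; rewrite eqEsubset cfcenter_sub -{1}cHH center_sub_cfcenter_irr.
  by rewrite !cfcenterH subxx.
have cfcenter_center k : ~~ ('Z(H) \proper 'Z('chi[H]_k)%CF) -> 'Z('chi_k)%CF = 'Z(H).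
  by move=> notX; apply/eqP; rewrite eq_sym eqEproper center_sub_cfcenter_irr.
have [Xi | /cfcenter_center->] := boolP ('Z(H) \proper 'Z('chi_i)%CF); last first.
  by rewrite center_sub_cfcenter_irr.
have [Xj | /cfcenter_center->] := boolP ('Z(H) \proper 'Z('chi_j)%CF); last first.
  by rewrite center_sub_cfcenter_irr orbT.
by apply: nestedK; apply: subset_trans (subsetIr _ _) (bigcap_inf _ _).
Qed.

Lemma nested_min_cfcenter (i0 : Iirr H) :
    nested_mod H 1 -> 'Z(H) \proper 'Z('chi_i0)%CF ->
  exists2 m : Iirr H, 'Z(H) \proper 'Z('chi_m)%CF
    & forall j : Iirr H, 'Z(H) \proper 'Z('chi_j)%CF -> 'Z('chi_m)%CF \subset 'Z('chi_j)%CF.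
Proof.
move=> nestedH Xi0; have [m Xm minm] :=
  arg_minnP (P := fun i => 'Z(H) \proper 'Z('chi[H]_i)%CF) (fun i => #|'Z('chi_i)%CF|) Xi0.
exists m => // j Xj; case/orP: (nestedH m j (sub1G _) (sub1G _)) => // sZjm.
by have/eqP <- : 'Z('chi_j)%CF == 'Z('chi_m)%CF by rewrite eqEcard sZjm minm.
Qed.

Lemma Kfun_neq1 : nested_mod H 1 -> H :!=: 1 -> Kfun H :!=: 1.
Proof.
move=> nestedH ntH; rewrite /Kfun; case: ifP => // _.
have [i0 Xi0 | noX] := pickP (fun i : Iirr H => 'Z(H) \proper 'Z('chi_i)%CF); last first.
  by rewrite big_pred0 // setIT.
have [m Xm minm] := nested_min_cfcenter nestedH Xi0.
have [_ [x Zx notZx]] := properP Xm.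
have Hx := subsetP (cfcenter_sub _) x Zx.
have [y Hy ncxy] : exists2 y, y \in H & [~ x, y] != 1.
  have : x \notin 'C(H) by apply: contra notZx => cHx; rewrite inE Hx cHx.
  rewrite -sub_cent1 => /subsetPn[y Hy notcxy]; exists y => //.
  by apply: contra notcxy => /commgP cxy; apply/cent1P.
apply: contra ncxy => /eqP trivK; rewrite -in_set1 -set1gE -trivK inE groupR //.
apply/bigcapP=> i Xi; apply: cfcenter_commg_cfker Hy.
exact: subsetP (minm i Xi) x Zx.
Qed.

End Kfun.

Section Kseq.
Variables (gT : finGroupType) (G : {group gT}).

Lemma Kseq_group_set n : group_set (Kseq G n).
Proof. by case: n => [|n]; apply: groupP. Qed.

Canonical Kseq_group n := Group (Kseq_group_set n).

Lemma Kseq_normal n : Kseq G n <| G.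
Proof.
elim: n => [|n IHn]; first exact: normal1.
by rewrite /= -{1}(quotientGK IHn) cosetpre_normal Kfun_normal.
Qed.

Lemma Kseq_sub_succ n : Kseq G n \subset Kseq G n.+1.
Proof. exact: sub_cosetpre. Qed.

Lemma nested_mod_Kseq_succ n : nested_mod G (Kseq G n.+1) -> nested_mod G (Kseq G n).
Proof.
have nsKG := Kseq_normal n.
move/(nested_mod_quotient nsKG)/nested_mod_Kfun/(nested_mod_quotient nsKG).
by rewrite cosetpre1.
Qed.

Lemma Kseq_proper n :
  nested_mod G 1 -> Kseq G n != G -> Kseq G n \proper Kseq G n.+1.
Proof.
move=> nestedG neKG; have nsKG := Kseq_normal n.
rewrite -{1}(cosetpre1 (Kseq G n)) /= cosetpre_proper proper1G.
apply: Kfun_neq1.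
  apply/(nested_mod_quotient nsKG); rewrite cosetpre1.
  exact: nested_modS (sub1G _) nestedG.
apply: contra neKG => /eqP trivGK.
by rewrite eqEsubset normal_sub //= -(quotient_sub1 (normal_norm nsKG)) trivGK.
Qed.

Lemma Kseq_eq_or_card n : nested_mod G 1 -> Kseq G n = G \/ (n < #|Kseq G n|)%N.
Proof.
move=> nestedG; elim: n => [|n IHn]; first by right; rewrite cards1.
have [eqKG | neKG] := eqVneq (Kseq G n) G.
  left; apply/eqP; rewrite eqEsubset normal_sub ?Kseq_normal //= -{1}eqKG.
  exact: Kseq_sub_succ.
right; case: IHn => [eqKG | ltnK]; first by rewrite eqKG eqxx in neKG.
exact: leq_ltn_trans ltnK (proper_card (Kseq_proper nestedG neKG)).
Qed.

Lemma nested_Kseq n : nested_mod G (Kseq G n) -> nested G.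
Proof.
move=> nestedK; apply/nested_mod1.
by elim: n nestedK => [// | n IHn] /nested_mod_Kseq_succ.
Qed.

End Kseq.

Theorem theoremE (gT : finGroupType) (G : {group gT}) :
  nested G <-> Kinf G = G :> {set gT}.
Proof.
rewrite /Kinf; split=> [/nested_mod1 nestedG | KinfG].
  have [// | ltGK] := Kseq_eq_or_card #|G| nestedG.
  by have := subset_leq_card (normal_sub (Kseq_normal G #|G|)); rewrite leqNgt ltGK.
by apply: (@nested_Kseq _ G #|G|); rewrite KinfG; apply: nested_modG.
Qed.
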